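(* Let $\mathcal D=(X,\mathcal A,\mu,\mu^{\otimes2},R,I,\Pi_R,G,E_0,\eta)$ be a pre-structural datum with $\eta\in[0,1)$ and $\mu(X)<\infty$, such that $\{r\}\in\mathcal A$ and $F_r:=\Pi_R^{-1}(\{r\})\in\mathcal A$ for every $r\in R$, and such that either (R-fin) $R$ is finite, or (R-ctbl) $R$ is countable, $\mathcal A$ is a $\sigma$-algebra and $\mu$ is $\sigma$-additive. Let $G|_R:=G\cap(R\times R)$ and let $\mathcal D|_R$ be the restricted datum $(R,\ \mathcal A\cap\mathcal P(R),\ \mu|_R,\ \mu^{\otimes2}|_{R\times R},\ R,\ \varnothing,\ \mathrm{id}_R,\ G|_R,\ \mu(R),\ \eta)$. Then: (i) If $\mathcal D$ satisfies Axiom I and Axiom III(b), then $\mu(X\setminus R)=0$ and, for every $B\in\mathcal A$, with $B_R:=B\cap R$, \[\mu^{\otimes2}((B\times X)\cap G)=\mu^{\otimes2}((B_R\times R)\cap G|_R).\] (ii) If $\mathcal D$ satisfies Axiom I and Axiom III(b), then the coupling law (Axiom III(c)) holds for $\mathcal D$ if and only if it holds for $\mathcal D|_R$, i.e. if and only if $\mu^{\otimes2}((B\times R)\cap G|_R)=\mu(B)+\eta\,\mu^{\otimes2}((B\times R)\cap G|_R)$ for all $B\in\mathcal A$ with $B\subseteq R$. (iii) If $\mathcal D$ satisfies Axioms I, II, III(a), III(b) and $X=R\sqcup I$, then $\mathcal D$ is an admissible structural model if and only if $\mathcal D|_R$ is an admissible structural model.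
   Context: For a nonempty set $X$, an algebra $\mathcal A\subseteq\mathcal P(X)$ contains $\varnothing,X$ and is closed under finite unions and complements. A finitely additive measure $\mu:\mathcal A\to[0,\infty)$ satisfies $\mu(\varnothing)=0$ and additivity on disjoint pairs. $\mathcal A\otimes\mathcal A$ denotes the algebra generated by rectangles $B_1\times B_2$, $B_i\in\mathcal A$. For relations $H,K\subseteq X\times X$, $H\circ K=\{(x,z):\exists y\,(x,y)\in H,(y,z)\in K\}$. A pre-structural datum is a tuple $(X,\mathcal A,\mu,\mu^{\otimes2},R,I,\Pi_R,G,E_0,\eta)$ where: $X$ nonempty; $\mathcal A$ an algebra on $X$; $\mu$ a finitely additive measure on $\mathcal A$; $\mu^{\otimes2}:\mathcal A\otimes\mathcal A\to[0,\infty)$ finitely additive with $\mu^{\otimes2}(B_1\times B_2)=\mu(B_1)\mu(B_2)$; $R,I\in\mathcal A$ disjoint; $\Pi_R:X\to R$ a map; $G\in\mathcal A\otimes\mathcal A$; $E_0\in(0,\infty)$; $\eta\in[0,1]$. Axiom I: $\Pi_R\circ\Pi_R=\Pi_R$, $\Pi_R(r)=r$ for $r\in R$, and $\Pi_R^{-1}(B)\in\mathcal A$ for every $B\in\mathcal A$ with $B\subseteq R$. Axiom II: $G$ is reflexive, symmetric, and $G\circ G=G$. Axiom III: (a) $\mu(R)+\mu(I)=E_0>0$; (b) $\mu(\Pi_R^{-1}(B))=\mu(B)$ for all $B\in\mathcal A$, $B\subseteq R$; (c) coupling law: for all $B\in\mathcal A$, $\mu^{\otimes2}((B\times X)\cap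 G)=\mu(B)+\eta\,\mu^{\otimes2}((\Pi_R^{-1}(B)\times X)\cap G)$. An admissible structural model is a pre-structural datum satisfying Axioms I, II, III. *)

From HB Require Import structures.
From mathcomp Require Import all_boot all_order all_algebra.
From mathcomp Require Import all_classical all_reals.
From mathcomp Require Import topology normedtype sequences.
Set Implicit Arguments. Unset Strict Implicit. Unset Printing Implicit Defensive.
Import Order.TTheory GRing.Theory Num.Theory numFieldNormedType.Exports.
Local Open Scope classical_set_scope.
Local Open Scope ring_scope.

Section Defs.
Variable R : realType.

Definition is_algebra {T : Type} (A : set (set T)) : Prop :=
  [/\ A set0, A setT,
      (forall B C, A B -> A C -> A (B `|` C)) &
      (forall B, A B -> A (~` B))].

Definition prod_alg {T : Type} (A : set (set T)) : set (set (T * T)) :=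
  fun S => forall C : set (set (T * T)), is_algebra C ->
    (forall B1 B2, A B1 -> A B2 -> C (B1 `*` B2)) -> C S.

(** Finitely additive measure A -> [0, oo) (values outside A are irrelevant). *)
Definition fin_add_measure {T : Type} (A : set (set T)) (m : set T -> R) : Prop :=
  [/\ m set0 = 0, (forall B, A B -> 0 <= m B) &
      (forall B C, A B -> A C -> B `&` C = set0 -> m (B `|` C) = m B + m C)].

Definition rel_comp {T : Type} (H K : set (T * T)) : set (T * T) :=
  fun p => exists y, H (p.1, y) /\ K (y, p.2).

Definition sigma_alg_closed {T : Type} (A : set (set T)) : Prop :=
  forall F : nat -> set T, (forall n, A (F n)) -> A (\bigcup_n F n).

Definition sigma_additive {T : Type} (A : set (set T)) (m : set T -> R) : Prop :=
  forall F : nat -> set T, (forall n, A (F n)) -> trivIset setT F ->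
    A (\bigcup_n F n) ->
    ((fun n => \sum_(k < n) m (F k)) : nat -> R) @ \oo --> (m (\bigcup_n F n) : R).

(** The tuple (X, A, mu, mu2, R, I, Pi_R, G, E0, eta); X is the carrier type,
    Pi_R is a map X -> X whose range lies in R (required in pre_structural). *)
Record datum (X : Type) := Datum {
  dA : set (set X);
  dmu : set X -> R;
  dmu2 : set (X * X) -> R;
  dR : set X;
  dI : set X;
  dPi : X -> X;
  dG : set (X * X);
  dE0 : R;
  deta : R }.

Variable X : Type.
Implicit Type D : datum X.

Definition pre_structural D : Prop :=
  [/\ [/\ (exists x : X, True), is_algebra (dA D), fin_add_measure (dA D) (dmu D) &
      fin_add_measure (prod_alg (dA D)) (dmu2 D)],
      (forall B1 B2, dA D B1 -> dA D B2 ->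
          dmu2 D (B1 `*` B2) = dmu D B1 * dmu D B2),
      [/\ dA D (dR D), dA D (dI D), dR D `&` dI D = set0 &
          (forall x, dR D (dPi D x))] &
      [/\ prod_alg (dA D) (dG D), 0 < dE0 D & 0 <= deta D <= 1]].

Definition axiomI D : Prop :=
  [/\ (forall x, dPi D (dPi D x) = dPi D x),
      (forall r, dR D r -> dPi D r = r) &
      (forall B, dA D B -> B `<=` dR D -> dA D (dPi D @^-1` B))].

Definition axiomII D : Prop :=
  [/\ (forall x, dG D (x, x)),
      (forall x y, dG D (x, y) -> dG D (y, x)) &
      rel_comp (dG D) (dG D) = dG D].

Definition axiomIIIa D : Prop := dmu D (dR D) + dmu D (dI D) = dE0 D /\ 0 < dE0 D.

Definition axiomIIIb D : Prop :=
  forall B, dA D B -> B `<=` dR D -> dmu D (dPi D @^-1` B) = dmu D B.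

Definition axiomIIIc D : Prop :=
  forall B, dA D B ->
    dmu2 D ((B `*` setT) `&` dG D) =
    dmu D B + deta D * dmu2 D ((dPi D @^-1` B `*` setT) `&` dG D).

Definition admissible D : Prop :=
  [/\ pre_structural D, axiomI D, axiomII D &
      [/\ axiomIIIa D, axiomIIIb D & axiomIIIc D]].

Definition restrict_datum D : datum {x : X | dR D x} :=
  @Datum {x : X | dR D x}
    (fun B => dA D (sval @` B))
    (fun B => dmu D (sval @` B))
    (fun S => dmu2 D ((fun p => (sval p.1, sval p.2)) @` S))
    setT
    set0
    id
    (fun p => dG D (sval p.1, sval p.2))
    (dmu D (dR D))
    (deta D).

End Defs.

From HB Require Import structures.
From mathcomp Require Import all_boot all_order all_algebra.
From mathcomp Require Import all_classical all_reals.
From mathcomp Require Import topology normedtype sequences.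
From mathcomp Require Import lra.
Set Implicit Arguments. Unset Strict Implicit. Unset Printing Implicit Defensive.
Import Order.TTheory GRing.Theory Num.Theory.
Local Open Scope classical_set_scope.
Local Open Scope ring_scope.

(* Axiom III(b) at B = R reads mu(X) = mu(Pi_R^-1 R) = mu(R), so X \ R is mu-null; since mu2 of a
   rectangle is the product of the measures, the strips (X \ R) x X and X x (X \ R) are mu2-null.
   Cutting measurable sets down to R, resp. R x R, therefore does not change their measure, and as
   Pi_R fixes R pointwise this turns both sides of the coupling law for D into those for D|_R.  The
   structure of D|_R is the trace of that of D along the injection of the subtype R into X, which
   carries the remaining axioms over. *)


Section Algebra.
Variables (T : Type) (A : set (set T)).
Hypothesis algA : is_algebra A.

Lemma algebra0 : A set0. Proof. by case: algA. Qed.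
Lemma algebraT : A setT. Proof. by case: algA. Qed.
Lemma algebraU B C : A B -> A C -> A (B `|` C).
Proof. by case: algA => _ _ + _; apply. Qed.
Lemma algebraC B : A B -> A (~` B).
Proof. by case: algA => _ _ _; apply. Qed.

Lemma algebraI B C : A B -> A C -> A (B `&` C).
Proof.
by move=> AB AC; rewrite -[B `&` C]setCK setCI; apply/algebraC/algebraU; apply: algebraC.
Qed.

Lemma algebraD B C : A B -> A C -> A (B `\` C).
Proof. by move=> AB AC; apply: algebraI => //; apply: algebraC. Qed.

End Algebra.

Section ProductAlgebra.
Variables (T : Type) (A : set (set T)).

Lemma prod_alg_algebra : is_algebra (prod_alg A).
Proof.
split=> [C Calg _|C Calg _|B B' AB AB' C Calg rectC|B AB C Calg rectC].
- exact: algebra0.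
- exact: algebraT.
- by apply: algebraU => //; [apply: AB | apply: AB'].
- by apply: algebraC => //; apply: AB.
Qed.

Lemma prod_alg_setX B1 B2 : A B1 -> A B2 -> prod_alg A (B1 `*` B2).
Proof. by move=> AB1 AB2 C _; apply. Qed.

End ProductAlgebra.

Section FinitelyAdditiveMeasure.
Variables (R : realType) (T : Type) (A : set (set T)) (m : set T -> R).
Hypotheses (algA : is_algebra A) (mA : fin_add_measure A m).

Lemma fam0 : m set0 = 0. Proof. by case: mA. Qed.
Lemma fam_ge0 B : A B -> 0 <= m B.
Proof. by case: mA => _ + _; apply. Qed.
Lemma famU B C : A B -> A C -> B `&` C = set0 -> m (B `|` C) = m B + m C.
Proof. by case: mA => _ _; apply. Qed.

Lemma le_fam B C : A B -> A C -> B `<=` C -> m B <= m C.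
Proof.
move=> AB AC BC; rewrite -(setDUK BC) famU ?setDIK //; last exact: algebraD.
by rewrite lerDl fam_ge0 //; apply: algebraD.
Qed.

Lemma le_famU B C : A B -> A C -> m (B `|` C) <= m B + m C.
Proof.
move=> AB AC; have -> : B `|` C = B `|` (C `\` B) by rewrite setUDr setDv setD0.
rewrite famU ?setDIK //; last exact: algebraD.
by rewrite lerD2l le_fam //; apply: algebraD.
Qed.

Lemma fam_setC_eq0 C : A C -> m setT = m C -> m (~` C) = 0.
Proof. by move=> AC; rewrite -(setUv C) famU ?setICr //; [lra | apply: algebraC]. Qed.

Lemma fam_setI_conull B C : A B -> A C -> m (~` C) = 0 -> m (B `&` C) = m B.
Proof.
move=> AB AC mC0; have ABC := algebraD algA AB AC.
have disjBC : B `&` C `&` (B `\` C) = set0.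
  by apply/seteqP; split=> // x [[_ Cx] [_ /(_ Cx)]].
rewrite -{2}(setUIDK B C) famU //; last exact: algebraI.
have : m (B `\` C) <= m (~` C).
  by apply: le_fam (algebraC algA AC) _ => // x [].
by have := fam_ge0 ABC; lra.
Qed.

End FinitelyAdditiveMeasure.

Lemma setCX (T1 T2 : Type) (C1 : set T1) (C2 : set T2) :
  ~` (C1 `*` C2) = (~` C1 `*` setT) `|` (setT `*` ~` C2).
Proof.
apply/seteqP; split=> [[x y] /= nC|[x y] [[/= nC1 _] [C1x _]|[_ /= nC2] [_ C2y]]] //.
by have [C1x|] := pselect (C1 x); [right; split=> // C2y; apply: nC | left].
Qed.

Lemma fin_add_measureS (R : realType) (T : Type) (A A' : set (set T)) (m : set T -> R) :
  A' `<=` A -> fin_add_measure A m -> fin_add_measure A' m.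
Proof.
move=> A'A [m0 mge0 mU]; split=> // [B /A'A|B C /A'A AB /A'A]; [exact: mge0 | exact: mU].
Qed.

Section ProductMeasure.
Variables (R : realType) (T : Type) (A : set (set T)).
Variables (m : set T -> R) (m2 : set (T * T) -> R).
Hypothesis algA : is_algebra A.
Hypothesis m2A : fin_add_measure (prod_alg A) m2.
Hypothesis m2_setX : forall B1 B2, A B1 -> A B2 -> m2 (B1 `*` B2) = m B1 * m B2.

Lemma fam_setX_conull C S : A C -> m (~` C) = 0 -> prod_alg A S ->
  m2 (S `&` (C `*` C)) = m2 S.
Proof.
move=> AC mC0 AS; have algA2 := prod_alg_algebra A.
have [ACc AT] := (algebraC algA AC, algebraT algA).
have [AstripL AstripR] := (prod_alg_setX ACc AT, prod_alg_setX AT ACc).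
apply: (fam_setI_conull algA2 m2A AS (prod_alg_setX AC AC)).
rewrite setCX; have := le_famU algA2 m2A AstripL AstripR.
have := fam_ge0 m2A (algebraU algA2 AstripL AstripR).
by rewrite !m2_setX // mC0 mul0r mulr0; lra.
Qed.

End ProductMeasure.

Section InjectiveImage.
Variables (S T : Type) (f : S -> T).
Local Notation f2 := (fun p : S * S => (f p.1, f p.2)).

Lemma image_pair_setX B1 B2 : f2 @` (B1 `*` B2) = f @` B1 `*` f @` B2.
Proof.
apply/seteqP; split=> [_ [[x y] [B1x B2y] <-]|[a b] [/= [x B1x <-] [y B2y <-]]].
  by split; [exists x | exists y].
by exists (x, y).
Qed.

Lemma image_preimage_range Y : f @` (f @^-1` Y) = Y `&` range f.
Proof.
apply/seteqP; split=> [_ [x Yfx <-]|y [Yy [x _ fxy]]]; first by split=> //; exists x.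
by exists x; rewrite // /preimage /= fxy.
Qed.

Hypothesis f_inj : injective f.

Lemma image_setC_inj B : f @` (~` B) = range f `\` f @` B.
Proof.
apply/seteqP; split=> [_ [x nBx <-]|_ [[x _ <-] nBfx]].
  by split; [exists x | move=> [y By /f_inj yx]; apply: nBx; rewrite -yx].
by exists x => // Bx; apply: nBfx; exists x.
Qed.

Lemma image_setI_inj B C : f @` (B `&` C) = f @` B `&` f @` C.
Proof.
apply/seteqP; split=> [_ [x [Bx Cx] <-]|_ [[x Bx <-] [y Cy /f_inj yx]]].
  by split; exists x.
by exists x => //; split=> //; rewrite -yx.
Qed.

Lemma pair_map_inj : injective f2.
Proof. by move=> [x y] [x' y'] /= [/f_inj -> /f_inj ->]. Qed.

End InjectiveImage.

Lemma preimage_algebra (S T : Type) (g : S -> T) (A : set (set S)) :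
  is_algebra A -> is_algebra (fun B => A (g @^-1` B)).
Proof.
case=> A0 AT AUnion ACompl; split=> // [B C ABg ACg|B ABg].
- exact: AUnion ABg ACg.
- exact: ACompl ABg.
Qed.

Section Trace.
Variables (S T : Type) (f : S -> T) (A : set (set T)).
Hypothesis f_inj : injective f.
Local Notation trace := (fun B : set S => A (f @` B)).

Lemma trace_algebra : is_algebra A -> A (range f) -> is_algebra trace.
Proof.
move=> algA Arange; split=> /= [||B C AB AC|B AB].
- by rewrite image_set0; apply: algebra0.
- exact: Arange.
- by rewrite image_setU; apply: algebraU.
- by rewrite image_setC_inj //; apply: algebraD.
Qed.

Lemma trace_fam (R : realType) (m : set T -> R) :
  fin_add_measure A m -> fin_add_measure trace (fun B => m (f @` B)).
Proof.
move=> mA; split=> /= [|B AB|B C AB AC BC].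
- by rewrite image_set0 (fam0 mA).
- exact: (fam_ge0 mA AB).
- by rewrite image_setU (famU mA) // -image_setI_inj // BC image_set0.
Qed.

End Trace.

Section ProductTrace.
Variables (S T : Type) (f : S -> T) (A : set (set T)).
Hypotheses (f_inj : injective f) (algA : is_algebra A) (Arange : A (range f)).
Local Notation trace := (fun B : set S => A (f @` B)).
Local Notation f2 := (fun p : S * S => (f p.1, f p.2)).

Lemma prod_alg_trace_image S' : prod_alg trace S' -> prod_alg A (f2 @` S').
Proof.
have A2range : prod_alg A (range f2).
  by rewrite -(@setXTT S S) image_pair_setX; apply: prod_alg_setX.
move=> AS'; apply: (AS' (fun S' => prod_alg A (f2 @` S'))) => [|B1 B2 AB1 AB2].
  exact: trace_algebra (pair_map_inj f_inj) (prod_alg_algebra A) A2range.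
by rewrite image_pair_setX; apply: prod_alg_setX.
Qed.

Lemma trace_prod_fam (R : realType) (m2 : set (T * T) -> R) :
  fin_add_measure (prod_alg A) m2 ->
  fin_add_measure (prod_alg trace) (fun S' => m2 (f2 @` S')).
Proof.
move=> m2A; apply: (fin_add_measureS prod_alg_trace_image).
exact: (trace_fam (pair_map_inj f_inj) m2A).
Qed.

Lemma prod_alg_trace_preimage S0 : prod_alg A S0 -> prod_alg trace (f2 @^-1` S0).
Proof.
move=> AS0; apply: (AS0 (fun S0 => prod_alg trace (f2 @^-1` S0))) => [|B1 B2 AB1 AB2].
  exact: (preimage_algebra f2 (prod_alg_algebra trace)).
by apply: (@prod_alg_setX _ trace (f @^-1` B1) (f @^-1` B2));
  rewrite /= image_preimage_range; apply: algebraI.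
Qed.

End ProductTrace.

Lemma sval_inj (T : Type) (P : T -> Prop) : injective (@sval T P).
Proof. by move=> [x Px] [y Py] /= xy; apply: eq_exist. Qed.

Lemma range_sval (T : Type) (P : T -> Prop) : range (@sval T P) = P.
Proof.
apply/seteqP; split=> [_ [[x Px] _ <-] //|x Px].
by exists (exist P x Px).
Qed.

Section Restriction.
Variables (R : realType) (X : Type) (D : datum R X).

Local Notation A := (dA D).
Local Notation mu := (dmu D).
Local Notation mu2 := (dmu2 D).
Local Notation RR := (dR D).
Local Notation G := (dG D).
Local Notation Pi := (dPi D).
Local Notation DR := (restrict_datum D).
Local Notation mass_R B := (mu2 ((B `*` RR) `&` (G `&` (RR `*` RR)))).

Lemma restrict_coupling_mass (B : set {x | RR x}) :
  dmu2 DR ((B `*` setT) `&` dG DR) = mass_R (sval @` B).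
Proof.
congr mu2; apply/seteqP.
split=> [_ [[x y] [[Bx _] Gxy] <-]|[a b] [[/= [x Bx <-] Rb] [Gab _]]].
  by split; [split; [exists x | exact: svalP] | split=> //; split; exact: svalP].
by exists (x, exist _ b Rb).
Qed.

Lemma axiomIIIc_restrict_iff : axiomIIIc DR <->
  (forall B, A B -> B `<=` RR -> mass_R B = mu B + deta D * mass_R B).
Proof.
split=> [coupling B AB BR|couplingR B AB].
- have svalB : sval @` (sval @^-1` B : set {x | RR x}) = B.
    by rewrite image_preimage_range range_sval setIidl.
  have := coupling (sval @^-1` B); rewrite !restrict_coupling_mass /= svalB.
  by apply.
- rewrite restrict_coupling_mass; apply: couplingR => //.
  by move=> _ [x _ <-]; apply: svalP.
Qed.

Hypothesis preD : pre_structural D.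

Let algA : is_algebra A. Proof. by case: preD => [[]]. Qed.
Let muA : fin_add_measure A mu. Proof. by case: preD => [[]]. Qed.
Let mu2A : fin_add_measure (prod_alg A) mu2. Proof. by case: preD => [[]]. Qed.
Let mu2_setX B1 B2 : A B1 -> A B2 -> mu2 (B1 `*` B2) = mu B1 * mu B2.
Proof. by case: preD => _ + _ _; apply. Qed.
Let AR : A RR. Proof. by case: preD => _ _ []. Qed.
Let AI : A (dI D). Proof. by case: preD => _ _ []. Qed.
Let RI0 : RR `&` dI D = set0. Proof. by case: preD => _ _ []. Qed.
Let RPi x : RR (Pi x). Proof. by case: preD => _ _ [_ _ _ +] _; apply. Qed.
Let AG : prod_alg A G. Proof. by case: preD => _ _ _ []. Qed.
Let Arange : A (range (@sval X RR)). Proof. by rewrite range_sval. Qed.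

Section AxiomsI_IIIb.
Hypotheses (axI : axiomI D) (axIIIb : axiomIIIb D).

Lemma mu_setCR : mu (~` RR) = 0.
Proof.
have PiRT : Pi @^-1` RR = setT by apply/seteqP; split=> x // _; apply: RPi.
by apply: (fam_setC_eq0 algA muA AR); rewrite -PiRT axIIIb.
Qed.

Lemma coupling_mass_on_R B : A B -> mu2 ((B `*` setT) `&` G) = mass_R (B `&` RR).
Proof.
move=> AB; rewrite -(fam_setX_conull algA mu2A mu2_setX AR mu_setCR); last first.
  by apply: (algebraI (prod_alg_algebra A)) AG; apply: prod_alg_setX => //; apply: algebraT.
congr mu2; apply/seteqP.
by split=> [[x y] [[[Bx _] Gxy] [Rx Ry]]|[x y] [[[Bx Rx] Ry] [Gxy _]]].
Qed.

Lemma preimage_Pi_setIR B : Pi @^-1` B `&` RR = B `&` RR.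
Proof.
case: axI => _ Pi_id _; apply/seteqP.
by split=> x [Bx Rx]; split=> //; move: Bx; rewrite /preimage /= Pi_id.
Qed.

Lemma dA_preimage_Pi B : A B -> A (Pi @^-1` B).
Proof.
case: axI => _ _ APi AB; have -> : Pi @^-1` B = Pi @^-1` (B `&` RR).
  by apply/seteqP; split=> x //= [].
by apply: APi; [apply: algebraI | apply: subIsetr].
Qed.

Lemma axiomIIIc_iff_on_R : axiomIIIc D <->
  (forall B, A B -> B `<=` RR -> mass_R B = mu B + deta D * mass_R B).
Proof.
split=> [coupling B AB BR|couplingR B AB]; have APiB := dA_preimage_Pi AB.
- have := coupling B AB.
  by rewrite !coupling_mass_on_R // preimage_Pi_setIR (setIidl BR).
- rewrite !coupling_mass_on_R // preimage_Pi_setIR.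
  rewrite -(fam_setI_conull algA muA AB AR mu_setCR).
  by apply: couplingR; [apply: algebraI | apply: subIsetr].
Qed.

End AxiomsI_IIIb.

Section AxiomsII_IIIa_IIIb.
Hypotheses (axII : axiomII D) (axIIIa : axiomIIIa D) (axIIIb : axiomIIIb D).

Lemma mu_R_gt0 : 0 < mu RR.
Proof.
have mu_I_le : mu (dI D) <= mu (~` RR).
  apply: le_fam AI (algebraC algA AR) _ => // x Ix Rx.
  by have : (RR `&` dI D) x by []; rewrite RI0.
have := fam_ge0 muA AI; have := mu_setCR axIIIb; case: axIIIa; lra.
Qed.

Lemma pre_structural_restrict : pre_structural DR.
Proof.
have [x Rx] : exists x, RR x.
  apply: contrapT => noR; move: mu_R_gt0.
  suff -> : RR = set0 by rewrite (fam0 muA) ltxx.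
  by apply/seteqP; split=> // x Rx; apply: noR; exists x.
split; [split | | split | split] => //=.
- by exists (exist _ x Rx).
- exact: trace_algebra (@sval_inj X RR) algA Arange.
- exact: (trace_fam (@sval_inj X RR) muA).
- exact: (trace_prod_fam (@sval_inj X RR) Arange mu2A).
- by move=> B1 B2 AB1 AB2; rewrite image_pair_setX mu2_setX.
- by rewrite image_set0; apply: algebra0.
- by rewrite setI0.
- exact: (prod_alg_trace_preimage algA Arange AG).
- exact: mu_R_gt0.
- by case: preD => _ _ _ [].
Qed.

Lemma axiomII_restrict : axiomII DR.
Proof.
case: axII => Grefl Gsym Gtrans; split=> [x | x y | ]; [exact: Grefl | exact: Gsym |].
apply/seteqP; split=> [[x z] [y [Gxy Gyz]] | [x z] Gxz] /=.
  by rewrite -Gtrans; exists (sval y).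
by exists x; split=> //; apply: Grefl.
Qed.

Lemma axiomIIIa_restrict : axiomIIIa DR.
Proof. by split; rewrite /= ?image_set0 ?(fam0 muA) ?addr0 ?range_sval //; apply: mu_R_gt0. Qed.

End AxiomsII_IIIa_IIIb.

End Restriction.

Theorem theorem8p18 (R : realType) (X : Type) (D : datum R X) :
  pre_structural D ->
  deta D < 1 ->
  (forall r, dR D r -> dA D [set r] /\ dA D (dPi D @^-1` [set r])) ->
  (finite_set (dR D) \/
   [/\ countable (dR D), sigma_alg_closed (dA D) & sigma_additive (dA D) (dmu D)]) ->
  (* (i) *)
  (axiomI D -> axiomIIIb D ->
     dmu D (setT `\` dR D) = 0 /\
     (forall B, dA D B ->
        dmu2 D ((B `*` setT) `&` dG D) =
        dmu2 D (((B `&` dR D) `*` dR D) `&` (dG D `&` (dR D `*` dR D))))) /\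
  (* (ii) *)
  (axiomI D -> axiomIIIb D ->
     (axiomIIIc D <-> axiomIIIc (restrict_datum D)) /\
     (axiomIIIc D <->
        (forall B, dA D B -> B `<=` dR D ->
           dmu2 D ((B `*` dR D) `&` (dG D `&` (dR D `*` dR D))) =
           dmu D B + deta D * dmu2 D ((B `*` dR D) `&` (dG D `&` (dR D `*` dR D)))))) /\
  (* (iii) *)
  (axiomI D -> axiomII D -> axiomIIIa D -> axiomIIIb D ->
     dR D `|` dI D = setT ->
     (admissible D <-> admissible (restrict_datum D))).
Proof.
move=> preD _ _ _.
have IIIc_iff : axiomI D -> axiomIIIb D -> (axiomIIIc D <-> axiomIIIc (restrict_datum D)).
  move=> axI axIIIb; apply: iff_trans (axiomIIIc_iff_on_R preD axI axIIIb) _.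
  exact: iff_sym (axiomIIIc_restrict_iff D).
split; [|split].
- move=> axI axIIIb; split; first by rewrite setTD; apply: mu_setCR.
  exact: coupling_mass_on_R.
- by move=> axI axIIIb; split; [apply: IIIc_iff | apply: axiomIIIc_iff_on_R].
- move=> axI axII axIIIa axIIIb _; have IIIc_iff' := IIIc_iff axI axIIIb.
  split=> [[_ _ _ [_ _ /IIIc_iff' IIIcR]] | [_ _ _ [_ _ /IIIc_iff' IIIc]]].
  + split; [exact: pre_structural_restrict | by [] | exact: axiomII_restrict |].
    by split=> //; apply: axiomIIIa_restrict.
  + by split.
Qed.
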